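(* Let $k\ge 3$, let $i,i'$ be two distinct vertices and $c,c'\in[k]$. Let $H=H(i,i',c,c')$ be the partially pre-coloured graph built as follows: take two disjoint $k$-cliques with vertices $l_1,\dots,l_k$ and $r_1,\dots,r_k$; add the edge $\{i,l_1\}$; add a new vertex $w$, pre-coloured with colour $c$, adjacent to $l_2,\dots,l_{k-1}$; add the edge $\{i',r_1\}$; add a new vertex $w'$, pre-coloured with colour $c'$, adjacent to $r_2,\dots,r_{k-1}$; finally, if $c=c'$ add the edge $\{l_k,r_k\}$, and if $c\neq c'$ identify $l_k$ and $r_k$ into a single vertex. Then: (1) $H$ has $O(k)$ vertices; (2) $H$ has two pre-coloured vertices, each of degree $O(k)$; (3) for every pair $(b,b')\in[k]^2$ with $(b,b')\neq(c,c')$ there is a legal $k$-colouring $\chi$ of $H$ extending the pre-colouring with $\chi(i)=b$ and $\chi(i')=b'$, while no legal $k$-colouring of $H$ extending the pre-colouring has $\chi(i)=c$ and $\chi(i')=c'$.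
   Context: A legal $k$-colouring of a graph is a map from its vertices to $[k]$ assigning distinct colours to the endpoints of every edge; it extends a pre-colouring if it agrees with the prescribed colours on the pre-coloured vertices. *)

From mathcomp Require Import all_boot.
Set Implicit Arguments. Unset Strict Implicit. Unset Printing Implicit Defensive.

Definition legal_colouring (T : finType) (k : nat) (V : {set T}) (adj : rel T)
  (chi : T -> 'I_k) : Prop :=
  forall x y, x \in V -> y \in V -> adj x y -> chi x != chi y.

Definition degree (T : finType) (V : {set T}) (adj : rel T) (x : T) : nat :=
  #|[set y in V | adj x y]|.

(* Raw vertices of the gadget H(i,i',c,c'):
   inl 0 = i, inl 1 = i', inl 2 = w, inl 3 = w',
   inr (inl j) = l_(j+1), inr (inr j) = r_(j+1)   (j : 'I_k). *)
Definition hvert (k : nat) := ('I_4 + ('I_k + 'I_k))%type.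

Definition vI  {k} : hvert k := inl (@Ordinal 4 0 isT).
Definition vI' {k} : hvert k := inl (@Ordinal 4 1 isT).
Definition vW  {k} : hvert k := inl (@Ordinal 4 2 isT).
Definition vW' {k} : hvert k := inl (@Ordinal 4 3 isT).
Definition vL {k} (j : 'I_k) : hvert k := inr (inl j).
Definition vR {k} (j : 'I_k) : hvert k := inr (inr j).

(* Edges before the possible identification of l_k and r_k. *)
Definition base_arc (k : nat) (c c' : 'I_k) (x y : hvert k) : bool :=
  match x, y with
  | inr (inl a), inr (inl b) => a != b
  | inr (inr a), inr (inr b) => a != b
  | inl o, inr (inl b) =>
      ((val o == 0) && (val b == 0))
      || ((val o == 2) && (0 < val b < k.-1))
  | inl o, inr (inr b) =>
      ((val o == 1) && (val b == 0))
      || ((val o == 3) && (0 < val b < k.-1))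
  | inr (inl a), inr (inr b) =>
      [&& c == c', val a == k.-1 & val b == k.-1]
  | _, _ => false
  end.

Definition base_adj (k : nat) (c c' : 'I_k) : rel (hvert k) :=
  fun x y => base_arc c c' x y || base_arc c c' y x.

(* If c <> c', r_k is identified with l_k. *)
Definition hcanon (k : nat) (c c' : 'I_k) (x : hvert k) : hvert k :=
  if c == c' then x else
  match x with
  | inr (inr b) => if val b == k.-1 then inr (inl b) else x
  | _ => x
  end.

Definition hV (k : nat) (c c' : 'I_k) : {set hvert k} :=
  [set hcanon c c' x | x : hvert k].

Definition hadj (k : nat) (c c' : 'I_k) : rel (hvert k) :=
  fun x y => (x != y) &&
    [exists u, exists v,
       [&& hcanon c c' u == x, hcanon c c' v == y & base_adj c c' u v]].

Definition extends_precol (k : nat) (c c' : 'I_k) (chi : hvert k -> 'I_k) : Prop :=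
  chi vW = c /\ chi vW' = c'.

From mathcomp Require Import all_boot fingroup perm zify.

Set Implicit Arguments.
Unset Strict Implicit.
Unset Printing Implicit Defensive.

(* In a legal colouring the clique l_1..l_k uses every colour, in particular c.
   Colour c cannot sit on l_1 (adjacent to i, coloured c) nor on l_2..l_(k-1)
   (adjacent to w), so l_k has colour c; likewise r_k has colour c'.  The last
   gadget (an edge if c = c', an identification if c <> c') forbids exactly
   this.  Conversely, for (b, b') <> (c, c') one colours each clique by a
   permutation fixing the colours of its two ends: l_1 avoids b, c is one of
   the end colours (so w sees no conflict), and the colours of l_k and r_k
   differ or agree according as c = c' or not. *)

Lemma exists_perm2 (T : finType) (a b x y : T) : a != b -> x != y ->
  exists s : {perm T}, s a = x /\ s b = y.
Proof.
move=> ab xy; set t1 := tperm a x; set t2 := tperm (t1 b) y.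
have t1b_x : t1 b != x.
  apply: contra ab => /eqP t1b.
  by rewrite -(inj_eq (@perm_inj _ t1)) t1b tpermL.
exists (t1 * t2)%g; rewrite !permM /t2 tpermL /t1 tpermL.
by split=> //; rewrite tpermD // eq_sym.
Qed.

Lemma exists_neq2 (T : finType) (p q : T) : 2 < #|T| ->
  exists z : T, z != p /\ z != q.
Proof.
move=> T3; have /card_gt0P [z] : 0 < #|~: [set p; q]|.
  by have := cardsC [set p; q]; rewrite cards2; lia.
by rewrite !inE negb_or => /andP[zp zq]; exists z.
Qed.

Lemma inj_forced_value (T : finType) (f : T -> T) (a j0 : T) :
  injective f -> (forall j, j != j0 -> f j != a) -> f j0 = a.
Proof.
move=> f_inj f_avoid; have /codomP [j a_fj] := inj_card_onto f_inj (leqnn _) a.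
by case: (eqVneq j j0) => [<- | /f_avoid]; rewrite a_fj ?eqxx.
Qed.

(* Admissible colours x of l_1 and y of l_k when i has colour b and w has
   colour c. *)
Definition admissible_ends (T : eqType) (b c x y : T) : bool :=
  [&& x != y, x != b & c \in [:: x; y]].

Lemma exists_admissible_ends (T : finType) (b b' c c' : T) :
  2 < #|T| -> (b, b') != (c, c') ->
  exists x y x' y', [/\ admissible_ends b c x y, admissible_ends b' c' x' y'
                      & if c == c' then y != y' else y == y'].
Proof.
move=> T3; wlog bc : b b' c c' / b != c => [sym|_].
  case: (eqVneq b c) => [-> | ]; last exact: sym.
  rewrite xpair_eqE eqxx /= => b'c'.
  have [|x [y [x' [y' [hL hR link]]]]] := sym b' c c' c b'c'.
    by rewrite xpair_eqE (negbTE b'c').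
  by exists x', y', x, y; rewrite eq_sym [y' == y]eq_sym.
have [z [zc' zb']] := exists_neq2 c' b' T3.
have [z1 [z1c _]] := exists_neq2 c c T3.
exists c, (if c == c' then z1 else c'), z, c'.
rewrite /admissible_ends !inE !eqxx zc' zb' [c == b]eq_sym bc orbT /=.
by case: (eqVneq c c') => [<- | cc']; rewrite ?eqxx /= ?andbT // eq_sym.
Qed.

Section Gadget.

Variables (k : nat) (c c' : 'I_k).

Local Notation canon := (hcanon c c').

Let k_gt0 : 0 < k. Proof. exact: leq_ltn_trans (leq0n c) (ltn_ord c). Qed.
Let last_lt : k.-1 < k. Proof. by rewrite ltn_predL. Qed.
Let ofirst : 'I_k := Ordinal k_gt0.
Let olast : 'I_k := Ordinal last_lt.

Lemma hcanon_inl (o : 'I_4) : canon (inl o) = inl o.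
Proof. by rewrite /hcanon; case: ifP. Qed.

Lemma hcanon_vL j : canon (vL j) = vL j.
Proof. by rewrite /hcanon; case: ifP. Qed.

Lemma hcanon_vR j :
  canon (vR j) = if (c != c') && (val j == k.-1) then vL j else vR j.
Proof. by rewrite /hcanon; case: eqP => //=; case: ifP. Qed.

Lemma hcanon_vR_inj : injective (fun j => canon (vR j)).
Proof. by move=> a d; rewrite /= !hcanon_vR; do 2 case: ifP => _; case. Qed.

Lemma inl_in_hV (o : 'I_4) : inl o \in hV c c'.
Proof. by apply/imsetP; exists (inl o); rewrite ?hcanon_inl. Qed.

Lemma legal_base_adj (chi : hvert k -> 'I_k) u v :
  legal_colouring (hV c c') (hadj c c') chi ->
  base_adj c c' u v -> canon u != canon v -> chi (canon u) != chi (canon v).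
Proof.
move=> legal uv neq; apply: legal; rewrite ?imset_f //.
rewrite /hadj neq; apply/existsP; exists u; apply/existsP; exists v.
by rewrite !eqxx.
Qed.

Lemma legal_of_base_arc (chi : hvert k -> 'I_k) :
  (forall u, chi (canon u) = chi u) ->
  (forall u v, base_arc c c' u v -> chi u != chi v) ->
  legal_colouring (hV c c') (hadj c c') chi.
Proof.
move=> chi_canon proper x y _ _.
case/andP=> _ /existsP[u /existsP[v /and3P[/eqP<- /eqP<- uv]]].
by rewrite !chi_canon; case/orP: uv => /proper //; rewrite eq_sym.
Qed.

Lemma last_forced (f : 'I_k -> 'I_k) (a : 'I_k) : injective f ->
  (forall j : 'I_k, j = 0 :> nat -> f j != a) ->
  (forall j : 'I_k, 0 < j < k.-1 -> f j != a) ->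
  f olast = a.
Proof.
move=> f_inj f_first f_mid; apply: inj_forced_value f_inj _ => j.
rewrite -val_eqE /= => j_last; have := ltn_ord j.
case: (posnP j) => [/f_first // | j_pos j_lt]; apply: f_mid; rewrite j_pos; lia.
Qed.

Lemma mid_avoids (p : {perm 'I_k}) a (j : 'I_k) :
  a \in [:: p ofirst; p olast] -> 0 < j < k.-1 -> p j != a.
Proof.
rewrite !inE => /orP[] /eqP -> /andP[j_pos j_lt];
  by rewrite (inj_eq perm_inj) -val_eqE /=; lia.
Qed.

Section NoExtension.

Variable chi : hvert k -> 'I_k.
Hypotheses (chi_legal : legal_colouring (hV c c') (hadj c c') chi)
  (chi_w : chi vW = c) (chi_w' : chi vW' = c')
  (chi_i : chi vI = c) (chi_i' : chi vI' = c').

Lemma chi_base_neq (o : 'I_4) v :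
  base_adj c c' (inl o) v -> chi (canon v) != chi (inl o).
Proof.
move=> ov; rewrite eq_sym -[inl o]hcanon_inl.
apply: legal_base_adj chi_legal (ov) _; rewrite hcanon_inl.
by case: v ov => [//|[j|j]] _; rewrite ?hcanon_vL ?hcanon_vR //; case: ifP.
Qed.

Lemma chi_vL_inj : injective (fun j => chi (vL j)).
Proof.
move=> a d /= e; apply/eqP; apply: contraT => ad.
have /(legal_base_adj chi_legal) : base_adj c c' (vL a) (vL d).
  by rewrite /base_adj /= ad.
rewrite !hcanon_vL e eqxx; apply.
by apply: contra ad => /eqP [->].
Qed.

Lemma chi_vR_inj : injective (fun j => chi (canon (vR j))).
Proof.
move=> a d /= e; apply/eqP; apply: contraT => ad.
have /(legal_base_adj chi_legal) : base_adj c c' (vR a) (vR d).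
  by rewrite /base_adj /= ad.
rewrite e eqxx; apply.
by apply: contra ad => /eqP /hcanon_vR_inj ->.
Qed.

Lemma chi_vL_last : chi (vL olast) = c.
Proof.
apply: last_forced chi_vL_inj _ _ => j hj.
  have /chi_base_neq : base_adj c c' vI (vL j) by rewrite /base_adj /= hj.
  by rewrite hcanon_vL chi_i.
have /chi_base_neq : base_adj c c' vW (vL j) by rewrite /base_adj /= hj.
by rewrite hcanon_vL chi_w.
Qed.

Lemma chi_vR_last : chi (canon (vR olast)) = c'.
Proof.
apply: last_forced chi_vR_inj _ _ => j hj.
  have /chi_base_neq : base_adj c c' vI' (vR j) by rewrite /base_adj /= hj.
  by rewrite chi_i'.
have /chi_base_neq : base_adj c c' vW' (vR j) by rewrite /base_adj /= hj.
by rewrite chi_w'.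
Qed.

Lemma no_extension : False.
Proof.
have := chi_vR_last; rewrite hcanon_vR /= eqxx andbT.
case: (eqVneq c c') => [cc' | ncc'] /= chi_last; last first.
  by move: ncc'; rewrite -chi_vL_last chi_last eqxx.
have /(legal_base_adj chi_legal) : base_adj c c' (vL olast) (vR olast).
  by rewrite /base_adj /= cc' !eqxx.
rewrite hcanon_vL hcanon_vR cc' eqxx /= chi_vL_last chi_last cc' eqxx.
by move/(_ isT).
Qed.

End NoExtension.

Section Colouring.

Variables (b b' : 'I_k) (pL pR : {perm 'I_k}).
Hypotheses (pL_ends : admissible_ends b c (pL ofirst) (pL olast))
  (pR_ends : admissible_ends b' c' (pR ofirst) (pR olast))
  (ends_link : if c == c' then pL olast != pR olast else pL olast == pR olast).

Definition gadget_colouring (v : hvert k) : 'I_k :=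
  match v with
  | inl o => nth c [:: b; b'; c; c'] o
  | inr (inl j) => pL j
  | inr (inr j) => pR j
  end.

Lemma gadget_colouring_canon u :
  gadget_colouring (canon u) = gadget_colouring u.
Proof.
case: u => [o|[j|j]]; rewrite ?hcanon_inl ?hcanon_vL ?hcanon_vR //.
case: ifP => // /andP[ncc' /eqP j_last]; have -> : j = olast by apply: val_inj.
by move: ends_link; rewrite (negbTE ncc') => /eqP.
Qed.

Lemma gadget_colouring_arc u v :
  base_arc c c' u v -> gadget_colouring u != gadget_colouring v.
Proof.
case/and3P: pL_ends => _ xbL cL; case/and3P: pR_ends => _ xbR cR.
case: u => [o|[a|a]]; case: v => [o'|[d|d]] //=;
  try by rewrite (inj_eq perm_inj).
- case/orP => [/andP[/eqP-> /eqP d0] | /and3P[/eqP-> d_pos d_lt]] /=.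
    by rewrite eq_sym (_ : d = ofirst) //; apply: val_inj.
  by rewrite eq_sym; apply: mid_avoids cL _; rewrite d_pos.
- case/orP => [/andP[/eqP-> /eqP d0] | /and3P[/eqP-> d_pos d_lt]] /=.
    by rewrite eq_sym (_ : d = ofirst) //; apply: val_inj.
  by rewrite eq_sym; apply: mid_avoids cR _; rewrite d_pos.
case/and3P => /eqP cc' /eqP a_last /eqP d_last.
have -> : a = olast by apply: val_inj.
have -> : d = olast by apply: val_inj.
by move: ends_link; rewrite cc' eqxx.
Qed.

Lemma gadget_colouring_legal :
  legal_colouring (hV c c') (hadj c c') gadget_colouring.
Proof.
exact: legal_of_base_arc gadget_colouring_canon gadget_colouring_arc.
Qed.

End Colouring.

Lemma gadget_colourable (b b' x y x' y' : 'I_k) : 1 < k ->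
  admissible_ends b c x y -> admissible_ends b' c' x' y' ->
  (if c == c' then y != y' else y == y') ->
  exists chi : hvert k -> 'I_k,
    legal_colouring (hV c c') (hadj c c') chi /\ extends_precol c c' chi /\
    chi vI = b /\ chi vI' = b'.
Proof.
move=> k_gt1 endsL endsR ends_link.
have first_last : ofirst != olast by rewrite -val_eqE /=; lia.
have /and3P [xy _ _] := endsL; have /and3P [xy' _ _] := endsR.
have [pL [pL_first pL_last]] := exists_perm2 first_last xy.
have [pR [pR_first pR_last]] := exists_perm2 first_last xy'.
exists (gadget_colouring b b' pL pR); split; last by [].
by apply: gadget_colouring_legal; rewrite ?pL_first ?pL_last ?pR_first ?pR_last.
Qed.

End Gadget.

Theorem claim3p2 :
  exists C : nat, forall (k : nat), 3 <= k -> forall c c' : 'I_k,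
    (* (1) O(k) vertices *)
    #|hV c c'| <= C * k /\
    (* (2) the two pre-coloured vertices w, w' have degree O(k) *)
    (vW \in hV c c' /\ vW' \in hV c c' /\
     degree (hV c c') (hadj c c') vW <= C * k /\
     degree (hV c c') (hadj c c') vW' <= C * k) /\
    (* (3) *)
    (forall b b' : 'I_k, (b, b') != (c, c') ->
       exists chi : hvert k -> 'I_k,
         legal_colouring (hV c c') (hadj c c') chi /\ extends_precol c c' chi /\
         chi vI = b /\ chi vI' = b') /\
    ~ (exists chi : hvert k -> 'I_k,
         legal_colouring (hV c c') (hadj c c') chi /\ extends_precol c c' chi /\
         chi vI = c /\ chi vI' = c').
Proof.
exists 4 => k k3 c c'.
have small : #|{: hvert k}| <= 4 * k by rewrite /hvert !card_sum !card_ord; lia.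
split; first exact: leq_trans (max_card _) small.
split; first by rewrite !inl_in_hV /degree !(leq_trans (max_card _) small).
split=> [b b' bb' | [chi [legal [[w w'] [i i']]]]].
  have k_colours : 2 < #|'I_k| by rewrite card_ord.
  have [x [y [x' [y' [endsL endsR ends_link]]]]] :=
    exists_admissible_ends k_colours bb'.
  exact: gadget_colourable (ltnW k3) endsL endsR ends_link.
exact: no_extension legal w w' i i'.
Qed.
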